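(* Let $X$ be a topological space, let $S\subseteq X$ be an $\alpha$-scaffold and let $\mathcal A$ be a cover of $S_{[0]}$. Then either there is $A_S\in\mathcal A$ such that $\mathrm{cor}\,S\in\overline{A_S\cap S_{[0]}}$, or there exists a countable family $\mathcal A_S\subseteq[\mathcal A]^\omega$ such that every $\mathcal A'\subseteq\mathcal A$ with $|\mathcal A'\cap\mathcal A''|=\omega$ for every $\mathcal A''\in\mathcal A_S$ satisfies $\mathrm{cor}\,S\in\overline{\bigcup\{S_{[0]}\cap B: B\in\mathcal A'\}}$.
   Context: Scaffolds in a space $X$ are defined by recursion. A pair $(S,\mathcal S)$ with $S\subseteq X$, $\mathcal S\subseteq 2^S$ is: (S.0) a $0$-scaffold if $S=\{x\}$, $\mathcal S=\{S\}$; then $\mathrm{ht}(S)=\mathrm{ht}_S(x)=0$ and $\mathrm{cor}\,S=x$. (S.1) an $\alpha$-scaffold if there are $x\in S$, pairwise disjoint open sets $U_n\subseteq X$, and $\alpha_n$-scaffolds $(S_n,\mathcal S_n)$ $(n\in\omega)$ with $(\alpha_n)$ nondecreasing, $\alpha=\min\{\beta:\beta>\alpha_n\text{ for all }n\}$, $\mathrm{cor}\,S_n\to x$, $\overline{S_n}\subseteq U_n$, $x\notin\overline{U_n}$, $S=\{x\}\cup\bigcup_nS_n$, $\mathcal S=\{S\}\cup\bigcup_n\mathcal S_n$; then $\mathrm{ht}(S)=\mathrm{ht}_S(x)=\alpha$, $\mathrm{ht}_S(x')=\mathrm{ht}_{S_n}(x')$ for $x'\in S_n$, and $\mathrm{cor}\,S=x$.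 A set $S\subseteq X$ is an $\alpha$-scaffold if such a stratification $\mathcal S$ exists; $\mathrm{cor}\,S$ and $\mathrm{ht}_S$ do not depend on its choice. $S_{[0]}=\{s\in S:\mathrm{ht}_S(s)=0\}$. $[\mathcal A]^\omega$ denotes the set of countably infinite subsets of $\mathcal A$. *)

From HB Require Import structures.
From mathcomp Require Import all_boot all_order all_algebra.
From mathcomp Require Import all_classical all_reals topology.
Set Implicit Arguments. Unset Strict Implicit. Unset Printing Implicit Defensive.
Import Order.TTheory.
Local Open Scope classical_set_scope.

(* Ordinal heights are taken in an arbitrary well-ordered type O (a totally
   ordered type whose strict order is well founded).  
   [scaffold O a S c Z] : S is an a-scaffold of X (w.r.t. some stratification)
   with ht(S) = a, cor S = c and S_[0] = Z. *)
Inductive scaffold {X : topologicalType} {d : Order.disp_t} (O : orderType d)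
  : O -> set X -> X -> set X -> Prop :=
| scaffold0 (a : O) (x : X) :
    (forall b : O, (a <= b)%O) ->
    scaffold a [set x] x [set x]
| scaffoldS (a : O) (x : X) (U : nat -> set X) (Sn : nat -> set X)
    (cn : nat -> X) (Zn : nat -> set X) (an : nat -> O) :
    (forall n, scaffold (an n) (Sn n) (cn n) (Zn n)) ->
    (forall n, (an n <= an n.+1)%O) ->
    (forall n, (an n < a)%O) ->
    (forall b : O, (forall n, (an n < b)%O) -> (a <= b)%O) ->
    cn @ \oo --> x ->
    (forall n, open (U n)) ->
    (forall n m, n <> m -> U n `&` U m = set0) ->
    (forall n, closure (Sn n) `<=` U n) ->
    (forall n, ~ closure (U n) x) ->
    scaffold a (x |` \bigcup_n Sn n) x (\bigcup_n Zn n).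

From HB Require Import structures.
From mathcomp Require Import all_boot all_order all_algebra.
From mathcomp Require Import all_classical all_reals topology.
Import Order.TTheory.
Local Open Scope classical_set_scope.

(* At a limit point x = lim c_n the induction
   hypothesis gives, for each n, either some B_n in A with c_n in
   cl(B_n ∩ Z_n), or a countable forcing family F_n.  If forcing families
   exist for infinitely many n, their union forces x.  Otherwise the B_n exist
   for infinitely many n; if one B serves infinitely often it is a witness for
   x, and if not, n |-> B_n is finite-to-one, so its range is countably
   infinite and every A' meeting the range in an infinite set contains B_n for
   infinitely many n, which forces x.  No induction on heights is involved. *)

Lemma infinite_set_unbounded {K : set nat} (N : nat) :
  infinite_set K -> exists2 n, K n & (N <= n)%N.
Proof.
move=> Kinf; apply: contrapT => noK; apply: Kinf.
apply: sub_finite_set (finite_II N) => n Kn /=.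
by rewrite ltnNge; apply/negP => Nn; apply: noK; exists n.
Qed.

Lemma infinite_preimage {T U} {f : T -> U} {K : set T} {B : set U} :
  infinite_set (B `&` f @` K) -> infinite_set (K `&` f @^-1` B).
Proof.
move=> BKinf /(finite_image f); apply: contra_not BKinf; apply: sub_finite_set.
by move=> u [Bu [t Kt tu]]; exists t => //; split; rewrite // /preimage /= tu.
Qed.

Lemma infinite_image_finite_fibers {T U} (f : T -> U) (K : set T) :
  infinite_set K -> (forall u, (f @` K) u -> finite_set (K `&` f @^-1` [set u])) ->
  infinite_set (f @` K).
Proof.
move=> Kinf fibers imfin; apply: Kinf.
apply: sub_finite_set (bigcup_finite imfin fibers).
by move=> t Kt; exists (f t); [exists t | split].
Qed.

Section ScaffoldCover.
Variables (X : topologicalType) (A : set (set X)).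

Definition forcing_family (Z : set X) (c : X) (F : set (set (set X))) :=
  countable F /\
  (forall B, F B -> B `<=` A /\ (B #= [set: nat])%card) /\
  (forall A' : set (set X), A' `<=` A ->
     (forall B, F B -> ((A' `&` B) #= [set: nat])%card) ->
     closure (\bigcup_(B in A') (Z `&` B)) c).

Section LimitStep.
Variables (Zn : nat -> set X) (cn : nat -> X) (x : X).
Hypothesis cn_cvg : cn @ \oo --> x.

Let Z := \bigcup_n Zn n.

Lemma closure_cvg_infinitely_often (C : set X) :
  infinite_set [set n | closure C (cn n)] -> closure C x.
Proof.
move=> Kinf W; rewrite nbhsE => -[V [oV Vx] VW].
have [N _ VN] : (cn @ \oo) V by apply/cn_cvg/open_nbhs_nbhs.
have [n clCn Nn] := infinite_set_unbounded N Kinf.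
have [y [Cy Vy]] := clCn V (open_nbhs_nbhs (conj oV (VN n Nn))).
by exists y; split => //; apply: VW.
Qed.

Lemma closure_bigcup_infinitely_often {A' : set (set X)} {K : set nat} :
  infinite_set K ->
  (forall n, K n -> closure (\bigcup_(B in A') (Zn n `&` B)) (cn n)) ->
  closure (\bigcup_(B in A') (Z `&` B)) x.
Proof.
move=> Kinf clK; apply: closure_cvg_infinitely_often.
apply: sub_infinite_set Kinf => n /clK; apply: closureS.
by move=> y [B A'B [Zny By]]; exists B => //; split => //; exists n.
Qed.

Lemma forcing_family_bigcup (K : set nat) (F : nat -> set (set (set X))) :
  infinite_set K -> (forall n, K n -> forcing_family (Zn n) (cn n) (F n)) ->
  forcing_family Z x (\bigcup_(n in K) F n).
Proof.
move=> Kinf FK; split; [|split].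
- by apply: bigcup_countable => [|n /FK []]; first exact: countableP.
- by move=> B [n /FK [_ [FnA _]]]; apply: FnA.
- move=> A' A'A A'F; apply: closure_bigcup_infinitely_often Kinf _ => n Kn.
  have [_ [_ forces]] := FK n Kn.
  by apply: forces A'A _ => B FnB; apply: A'F; exists n.
Qed.

Lemma forcing_family_witnesses (K : set nat) (g : nat -> set X) :
  infinite_set K ->
  (forall n, K n -> A (g n) /\ closure (g n `&` Zn n) (cn n)) ->
  (forall B, A B -> finite_set [set n | closure (B `&` Zn n) (cn n)]) ->
  forcing_family Z x [set g @` K].
Proof.
move=> Kinf gK Bfin; split; [|split].
- exact: countable1.
- move=> _ ->; split; first by move=> _ [n Kn <-]; have [] := gK n Kn.
  apply: eq_card_nat; first exact: sub_countable (card_image_le _ _) (countableP _).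
  apply: infinite_image_finite_fibers Kinf _ => _ [m Km <-].
  apply: sub_finite_set (Bfin _ (gK m Km).1) => n [/gK [_ +] gnB].
  by rewrite -gnB.
- move=> A' A'A A'g; have A'gK : infinite_set (A' `&` g @` K).
    by rewrite (eq_finite_set (A'g _ erefl)); exact: infinite_nat.
  apply: closure_bigcup_infinitely_often (infinite_preimage A'gK) _.
  move=> n [Kn A'gn]; apply: closureS (gK n Kn).2 => y [gny Zny].
  by exists (g n) => //; split.
Qed.

Definition cover_alternative (Z : set X) (c : X) :=
  (exists2 B, A B & closure (B `&` Z) c) \/ exists F, forcing_family Z c F.

Lemma cover_alternative_limit :
  (forall n, cover_alternative (Zn n) (cn n)) -> cover_alternative Z x.
Proof.
move=> alt.
pose Kw := [set n | exists2 B, A B & closure (B `&` Zn n) (cn n)].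
pose Kf := [set n | exists F, forcing_family (Zn n) (cn n) F].
have [Kwinf|Kfinf] : infinite_set Kw \/ infinite_set Kf.
  apply: contrapT => /not_orP [/contrapT Kwfin /contrapT Kffin]; apply: infinite_nat.
  apply: sub_finite_set (_ : _ `<=` Kw `|` Kf) _ => [n _|]; first exact: alt.
  by rewrite finite_setU.
- have [[B AB Binf]|noB] := pselect (exists2 B, A B &
      infinite_set [set n | closure (B `&` Zn n) (cn n)]).
    left; exists B => //; apply: closure_cvg_infinitely_often.
    apply: sub_infinite_set Binf => n; apply: closureS => y [By Zny].
    by split => //; exists n.
  right; have /choice [g gKw] : forall n, exists B,
      Kw n -> A B /\ closure (B `&` Zn n) (cn n).
    move=> n; have [[B AB clB]|nKw] := pselect (Kw n); first by exists B.
    by exists set0 => /nKw.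
  exists [set g @` Kw]; apply: forcing_family_witnesses => // B AB.
  by apply: contrapT => Binf; apply: noB; exists B.
- right; have /choice [F FKf] : forall n, exists F,
      Kf n -> forcing_family (Zn n) (cn n) F.
    move=> n; have [[F FF]|nKf] := pselect (Kf n); first by exists F.
    by exists set0 => /nKf.
  by exists (\bigcup_(n in Kf) F n); apply: forcing_family_bigcup.
Qed.

End LimitStep.

Lemma scaffold_cover_alternative (d : Order.disp_t) (O : orderType d) (a : O)
    (S : set X) (c : X) (Z : set X) :
  scaffold a S c Z -> Z `<=` \bigcup_(B in A) B -> cover_alternative Z c.
Proof.
elim=> {a S c Z} [a x _|a x U Sn cn Zn an _ IH _ _ _ cn_cvg _ _ _ _] ZA.
- by left; have [B AB Bx] := ZA x erefl; exists B => //; apply: subset_closure.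
- apply: cover_alternative_limit cn_cvg _ => n; apply: IH => y Zny.
  by apply: ZA; exists n.
Qed.

End ScaffoldCover.

Theorem lemma13 (X : topologicalType) (d : Order.disp_t) (O : orderType d)
  (wfO : well_founded (fun a b : O => (a < b)%O))
  (a : O) (S : set X) (c : X) (Z : set X)
  (hS : @scaffold X d O a S c Z)
  (A : set (set X)) (hA : Z `<=` \bigcup_(B in A) B) :
  (exists2 AS, A AS & closure (AS `&` Z) c) \/
  (exists AAS : set (set (set X)),
     countable AAS /\
     (forall B, AAS B -> B `<=` A /\ (B #= [set: nat])%card) /\
     (forall A' : set (set X), A' `<=` A ->
        (forall B, AAS B -> ((A' `&` B) #= [set: nat])%card) ->
        closure (\bigcup_(B in A') (Z `&` B)) c)).
Proof. exact: (@scaffold_cover_alternative X A d O a S c Z hS hA). Qed.
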